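(* Let $A$ be the set of $\alpha=(\alpha_0,\dots,\alpha_5)\in\mathbb{R}^6$ with $\alpha_0+\alpha_1=0$ and $\alpha_2+\alpha_3+\alpha_4+\alpha_5=1$. Let $G$ be the group acting on $A$ generated by the shifts \begin{align*} \sigma_1(\alpha)&=(\alpha_0+1,\alpha_1-1,\alpha_2,\alpha_3,\alpha_4,\alpha_5),\\ \sigma_2(\alpha)&=(\alpha_0,\alpha_1,\alpha_2+1,\alpha_3,\alpha_4,\alpha_5-1),\\ \sigma_3(\alpha)&=(\alpha_0,\alpha_1,\alpha_2,\alpha_3+1,\alpha_4,\alpha_5-1),\\ \sigma_4(\alpha)&=(\alpha_0,\alpha_1,\alpha_2,\alpha_3,\alpha_4+1,\alpha_5-1),\\ \sigma_5(\alpha)&=(\alpha_0+\tfrac12,\alpha_1-\tfrac12,\alpha_2+\tfrac12,\alpha_3+\tfrac12,\alpha_4-\tfrac12,\alpha_5-\tfrac12), \end{align*} by the permutations of $(\alpha_2,\alpha_3,\alpha_4,\alpha_5)$, and by the permutation exchanging $\alpha_0$ and $\alpha_1$. Then a fundamental domain for this action is the polytope \[ -\tfrac12\le\alpha_0\le0,\quad\alpha_1=-\alpha_0,\quad\alpha_2\le\alpha_3\le\alpha_4\le\alpha_5,\quad\alpha_4+\alpha_5\le1,\quad\alpha_2+\alpha_3+\alpha_4+\alpha_5=1. \] *)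

From Stdlib Require Import Reals List.
Open Scope R_scope.

Record V6 := mkV { a0 : R; a1 : R; a2 : R; a3 : R; a4 : R; a5 : R }.

Definition inA (x : V6) : Prop :=
  a0 x + a1 x = 0 /\ a2 x + a3 x + a4 x + a5 x = 1.

Definition inD (x : V6) : Prop :=
  -(1/2) <= a0 x <= 0 /\ a1 x = - a0 x /\
  a2 x <= a3 x /\ a3 x <= a4 x /\ a4 x <= a5 x /\
  a4 x + a5 x <= 1 /\ a2 x + a3 x + a4 x + a5 x = 1.

Definition interiorD (x : V6) : Prop :=
  inD x /\ exists eps, 0 < eps /\
    forall y, inA y ->
      Rabs (a0 y - a0 x) < eps -> Rabs (a1 y - a1 x) < eps ->
      Rabs (a2 y - a2 x) < eps -> Rabs (a3 y - a3 x) < eps ->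
      Rabs (a4 y - a4 x) < eps -> Rabs (a5 y - a5 x) < eps -> inD y.

(* Generators of G: the five shifts, the transpositions of the coordinates
   alpha_2..alpha_5 (which generate all their permutations), and the exchange
   of alpha_0 and alpha_1. *)
Inductive gen := S1 | S2 | S3 | S4 | S5
  | P23 | P24 | P25 | P34 | P35 | P45 | P01.

Definition act_gen (g : gen) (x : V6) : V6 :=
  let '(mkV b0 b1 b2 b3 b4 b5) := x in
  match g with
  | S1 => mkV (b0 + 1) (b1 - 1) b2 b3 b4 b5
  | S2 => mkV b0 b1 (b2 + 1) b3 b4 (b5 - 1)
  | S3 => mkV b0 b1 b2 (b3 + 1) b4 (b5 - 1)
  | S4 => mkV b0 b1 b2 b3 (b4 + 1) (b5 - 1)
  | S5 => mkV (b0 + 1/2) (b1 - 1/2) (b2 + 1/2) (b3 + 1/2) (b4 - 1/2) (b5 - 1/2)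
  | P23 => mkV b0 b1 b3 b2 b4 b5
  | P24 => mkV b0 b1 b4 b3 b2 b5
  | P25 => mkV b0 b1 b5 b3 b4 b2
  | P34 => mkV b0 b1 b2 b4 b3 b5
  | P35 => mkV b0 b1 b2 b5 b4 b3
  | P45 => mkV b0 b1 b2 b3 b5 b4
  | P01 => mkV b1 b0 b2 b3 b4 b5
  end.

Definition act_gen_inv (g : gen) (x : V6) : V6 :=
  let '(mkV b0 b1 b2 b3 b4 b5) := x in
  match g with
  | S1 => mkV (b0 - 1) (b1 + 1) b2 b3 b4 b5
  | S2 => mkV b0 b1 (b2 - 1) b3 b4 (b5 + 1)
  | S3 => mkV b0 b1 b2 (b3 - 1) b4 (b5 + 1)
  | S4 => mkV b0 b1 b2 b3 (b4 - 1) (b5 + 1)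
  | S5 => mkV (b0 - 1/2) (b1 + 1/2) (b2 - 1/2) (b3 - 1/2) (b4 + 1/2) (b5 + 1/2)
  | _ => act_gen g x
  end.

(* Elements of G are words in the generators and their inverses
   (true = generator, false = its inverse). *)
Fixpoint act_word (w : list (gen * bool)) (x : V6) : V6 :=
  match w with
  | nil => x
  | (g, true) :: w' => act_gen g (act_word w' x)
  | (g, false) :: w' => act_gen_inv g (act_word w' x)
  end.

From Stdlib Require Import Reals List Lra Lia Sorted.
Import ListNotations.
Open Scope R_scope.

(* Existence: integer shifts of alpha_2, alpha_3, alpha_4 bring all of
   alpha_2..alpha_5 into an interval of length 1; after sorting them, sigma_5
   followed by the exchanges (alpha_2 alpha_4)(alpha_3 alpha_5) achieves
   alpha_4 + alpha_5 <= 1, and sigma_1 together with the exchange of alpha_0 and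
   alpha_1 normalises alpha_0.

   Uniqueness: every element of G maps x to a point obtained from x by possibly
   exchanging alpha_0 and alpha_1, permuting alpha_2..alpha_5, and translating by
   a vector whose entries are either all integers or all half-integers, with the
   last four summing to 0.  An interior point of D has alpha_2 < ... < alpha_5 <
   alpha_2 + 1, and in an open alcove of this kind a permutation followed by an
   integral translation of sum 0 can only be the identity; the half-integral
   translations are reduced to this case by undoing sigma_5. *)

Definition same_elements (l l' : list R) : Prop := forall r, In r l <-> In r l'.

Lemma same_elements_trans l1 l2 l3 :
  same_elements l1 l2 -> same_elements l2 l3 -> same_elements l1 l3.
Proof. intros H12 H23 r; rewrite (H12 r); apply H23. Qed.

Lemma StronglySorted_Rlt_same_elements_eq (l l' : list R) :
  StronglySorted Rlt l -> StronglySorted Rlt l' -> same_elements l l' -> l = l'.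
Proof.
  revert l'; induction l as [|a l IH]; intros [|b l'] Hl Hl' Hsame.
  - reflexivity.
  - destruct (proj2 (Hsame b) (or_introl eq_refl)).
  - destruct (proj1 (Hsame a) (or_introl eq_refl)).
  - apply StronglySorted_inv in Hl as [Hl Ha], Hl' as [Hl' Hb].
    rewrite Forall_forall in Ha, Hb.
    assert (Hab : a = b).
    { destruct (proj1 (Hsame a) (or_introl eq_refl)) as [|Ha']; [congruence|].
      destruct (proj2 (Hsame b) (or_introl eq_refl)) as [|Hb']; [congruence|].
      specialize (Ha b Hb'); specialize (Hb a Ha'); lra. }
    subst b; f_equal; apply IH; [assumption|assumption|].
    intro r; split; intro Hr.
    + destruct (proj1 (Hsame r) (or_intror Hr)) as [<-|]; [|assumption].
      specialize (Ha a Hr); lra.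
    + destruct (proj2 (Hsame r) (or_intror Hr)) as [<-|]; [|assumption].
      specialize (Hb a Hr); lra.
Qed.

Lemma StronglySorted_Rlt4 (a b c d : R) :
  a < b -> b < c -> c < d -> StronglySorted Rlt [a; b; c; d].
Proof. intros; repeat constructor; lra. Qed.

Definition in_coset (h : bool) (r : R) : Prop :=
  exists z : Z, r = IZR z + (if h then 1/2 else 0).

Ltac coset_witness k :=
  intros [z ->]; exists (k z); cbv beta; rewrite ?plus_IZR, ?minus_IZR, ?opp_IZR; simpl; lra.

Lemma in_coset_add1 h r : in_coset h r -> in_coset h (r + 1).
Proof. coset_witness (fun z => z + 1)%Z. Qed.

Lemma in_coset_sub1 h r : in_coset h r -> in_coset h (r - 1).
Proof. coset_witness (fun z => z - 1)%Z. Qed.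

Lemma in_coset_addh h r : in_coset h r -> in_coset (negb h) (r + 1/2).
Proof. destruct h; [coset_witness (fun z => z + 1)%Z | coset_witness (fun z : Z => z)]. Qed.

Lemma in_coset_subh h r : in_coset h r -> in_coset (negb h) (r - 1/2).
Proof. destruct h; [coset_witness (fun z : Z => z) | coset_witness (fun z => z - 1)%Z]. Qed.

Lemma in_coset_opp h r : in_coset h r -> in_coset h (- r).
Proof. destruct h; [coset_witness (fun z => - z - 1)%Z | coset_witness (fun z => - z)%Z]. Qed.

Lemma int_between_up (m : R) (z : Z) : m < IZR z < m + 2 -> (up m <= z <= up m + 1)%Z.
Proof.
  intros Hz; destruct (archimed m).
  assert (up m - 1 < z)%Z by (apply lt_IZR; rewrite minus_IZR; lra).
  assert (z < up m + 2)%Z by (apply lt_IZR; rewrite plus_IZR; lra).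
  lia.
Qed.

Lemma int_vector_in_short_interval (m v0 v1 v2 v3 : R) :
  in_coset false v0 -> in_coset false v1 -> in_coset false v2 -> in_coset false v3 ->
  m < v0 < m + 2 -> m < v1 < m + 2 -> m < v2 < m + 2 -> m < v3 < m + 2 ->
  v0 + v1 + v2 + v3 = 0 -> v0 = 0 /\ v1 = 0 /\ v2 = 0 /\ v3 = 0.
Proof.
  intros [z0 ->] [z1 ->] [z2 ->] [z3 ->]; rewrite !Rplus_0_r.
  intros B0 B1 B2 B3 Hsum.
  apply int_between_up in B0, B1, B2, B3.
  assert (Hz : (z0 + z1 + z2 + z3 = 0)%Z) by (apply eq_IZR; rewrite !plus_IZR; exact Hsum).
  assert (z0 = 0 /\ z1 = 0 /\ z2 = 0 /\ z3 = 0)%Z as (-> & -> & -> & ->) by lia.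
  auto.
Qed.

Lemma int_in_unit_interval_eq0 (r : R) : in_coset false r -> -1 < r < 1 -> r = 0.
Proof.
  intros [z ->] Hr; rewrite Rplus_0_r in *.
  assert (z = 0)%Z as -> by (assert (-1 < z < 1)%Z by (split; apply lt_IZR; lra); lia).
  reflexivity.
Qed.

(* The open alcove x0 < x1 < x2 < x3 < x0 + 1 meets each orbit of the group of
   permutations and integral translations of sum 0 in at most one point. *)
Lemma alcove_rigid (x0 x1 x2 x3 p0 p1 p2 p3 v0 v1 v2 v3 : R) :
  x0 < x1 -> x1 < x2 -> x2 < x3 -> x3 < x0 + 1 ->
  p0 + v0 < p1 + v1 -> p1 + v1 < p2 + v2 -> p2 + v2 < p3 + v3 -> p3 + v3 < p0 + v0 + 1 ->
  same_elements [p0; p1; p2; p3] [x0; x1; x2; x3] ->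
  in_coset false v0 -> in_coset false v1 -> in_coset false v2 -> in_coset false v3 ->
  v0 + v1 + v2 + v3 = 0 ->
  [p0 + v0; p1 + v1; p2 + v2; p3 + v3] = [x0; x1; x2; x3].
Proof.
  intros X01 X12 X23 X30 Y01 Y12 Y23 Y30 Hsame Hv0 Hv1 Hv2 Hv3 Hsum.
  assert (Hp : forall p, In p [p0; p1; p2; p3] -> x0 <= p <= x3).
  { intros p Hp; apply Hsame in Hp as [<-|[<-|[<-|[<-|[]]]]]; lra. }
  assert (x0 <= p0 <= x3 /\ x0 <= p1 <= x3 /\ x0 <= p2 <= x3 /\ x0 <= p3 <= x3)
    by (split; [|split; [|split]]; apply Hp; simpl; tauto).
  (* hence every v_i = (p_i + v_i) - p_i lies within 1 of p0 + v0 - x0 *)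
  destruct (int_vector_in_short_interval (p0 + v0 - x0 - 1) v0 v1 v2 v3)
    as (-> & -> & -> & ->); try assumption; try lra.
  rewrite !Rplus_0_r in *.
  apply StronglySorted_Rlt_same_elements_eq; [apply StronglySorted_Rlt4; assumption..|].
  exact Hsame.
Qed.

Definition reach (x y : V6) : Prop := exists w, act_word w x = y.

Lemma act_word_app w1 w2 x : act_word (w1 ++ w2) x = act_word w1 (act_word w2 x).
Proof.
  induction w1 as [|[g []] w1 IH]; simpl; [reflexivity | rewrite IH..]; reflexivity.
Qed.

Lemma reach_refl x : reach x x.
Proof. exists nil; reflexivity. Qed.

Lemma reach_trans x y z : reach x y -> reach y z -> reach x z.
Proof. intros [w1 <-] [w2 <-]; exists (w2 ++ w1); apply act_word_app. Qed.

Lemma reach_gen g x : reach x (act_gen g x).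
Proof. exists [(g, true)]; reflexivity. Qed.

Lemma reach_gen_inv g x : reach x (act_gen_inv g x).
Proof. exists [(g, false)]; reflexivity. Qed.

Definition translate (d x : V6) : V6 :=
  mkV (a0 x + a0 d) (a1 x + a1 d) (a2 x + a2 d) (a3 x + a3 d) (a4 x + a4 d) (a5 x + a5 d).

Definition scale (r : R) (d : V6) : V6 :=
  mkV (r * a0 d) (r * a1 d) (r * a2 d) (r * a3 d) (r * a4 d) (r * a5 d).

Lemma reach_translate_int g d :
  (forall y, act_gen g y = translate d y) ->
  (forall y, act_gen_inv g y = translate (scale (-1) d) y) ->
  forall (z : Z) x, reach x (translate (scale (IZR z) d) x).
Proof.
  intros Hg Hinv z; induction z as [|z IH|z IH] using Z.peano_ind; intro x.
  - replace (translate (scale 0 d) x) with x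
      by (destruct x; unfold translate, scale; simpl; f_equal; ring).
    apply reach_refl.
  - eapply reach_trans; [apply (IH x)|].
    replace (translate (scale (IZR (Z.succ z)) d) x)
      with (act_gen g (translate (scale (IZR z) d) x))
      by (rewrite Hg, succ_IZR; destruct x; unfold translate, scale; simpl; f_equal; ring).
    apply reach_gen.
  - eapply reach_trans; [apply (IH x)|].
    replace (translate (scale (IZR (Z.pred z)) d) x)
      with (act_gen_inv g (translate (scale (IZR z) d) x))
      by (rewrite Hinv, <- Z.sub_1_r, minus_IZR; destruct x;
          unfold translate, scale; simpl; f_equal; ring).
    apply reach_gen_inv.
Qed.

Ltac translation_gen := intros []; unfold translate, scale; simpl; f_equal; ring.

Lemma reach_shift_a0 (z : Z) x : reach x (translate (scale (IZR z) (mkV 1 (-1) 0 0 0 0)) x).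
Proof. apply reach_translate_int with S1; translation_gen. Qed.

Lemma reach_shift_a2 (z : Z) x : reach x (translate (scale (IZR z) (mkV 0 0 1 0 0 (-1))) x).
Proof. apply reach_translate_int with S2; translation_gen. Qed.

Lemma reach_shift_a3 (z : Z) x : reach x (translate (scale (IZR z) (mkV 0 0 0 1 0 (-1))) x).
Proof. apply reach_translate_int with S3; translation_gen. Qed.

Lemma reach_shift_a4 (z : Z) x : reach x (translate (scale (IZR z) (mkV 0 0 0 0 1 (-1))) x).
Proof. apply reach_translate_int with S4; translation_gen. Qed.

Lemma int_shift_into_01 (r : R) : exists z : Z, 0 <= r + IZR z < 1.
Proof.
  exists (- Int_part r)%Z; rewrite opp_IZR.
  pose proof (base_fp r) as Hfp; unfold frac_part in Hfp; lra.
Qed.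

Definition closed_under (Q : V6 -> Prop) (g : gen) : Prop :=
  forall y, Q y -> Q (act_gen g y).

Definition compare_swap (g : gen) (i j : V6 -> R) (y : V6) : V6 :=
  if Rle_dec (i y) (j y) then y else act_gen g y.

Lemma compare_swap_spec Q g i j y :
  closed_under Q g -> Q y -> reach y (compare_swap g i j y) /\ Q (compare_swap g i j y).
Proof.
  unfold compare_swap; intros HQ Hy; destruct Rle_dec.
  - split; [apply reach_refl | exact Hy].
  - split; [apply reach_gen | apply HQ, Hy].
Qed.

Definition sort3 (y : V6) : V6 :=
  compare_swap P23 a2 a3 (compare_swap P34 a3 a4 (compare_swap P23 a2 a3 y)).

Definition sort4 (y : V6) : V6 :=
  compare_swap P34 a3 a4 (compare_swap P35 a3 a5
    (compare_swap P24 a2 a4 (compare_swap P45 a4 a5 (compare_swap P23 a2 a3 y)))).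

Definition sorted (y : V6) : Prop := a2 y <= a3 y /\ a3 y <= a4 y /\ a4 y <= a5 y.

Ltac decide_swaps := repeat (unfold compare_swap; destruct Rle_dec; simpl in *).

Lemma sort3_sorted y : a2 (sort3 y) <= a3 (sort3 y) <= a4 (sort3 y).
Proof. destruct y; unfold sort3; decide_swaps; lra. Qed.

Lemma sort4_sorted y : sorted (sort4 y).
Proof. destruct y; unfold sort4, sorted; decide_swaps; lra. Qed.

Lemma sort3_spec Q y :
  closed_under Q P23 -> closed_under Q P34 -> Q y -> reach y (sort3 y) /\ Q (sort3 y).
Proof.
  intros H23 H34 Hy; unfold sort3.
  destruct (compare_swap_spec Q P23 a2 a3 y) as [R1 Q1]; try assumption.
  destruct (compare_swap_spec Q P34 a3 a4 _ H34 Q1) as [R2 Q2].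
  destruct (compare_swap_spec Q P23 a2 a3 _ H23 Q2) as [R3 Q3].
  split; [apply (reach_trans _ _ _ R1), (reach_trans _ _ _ R2), R3 | exact Q3].
Qed.

Lemma sort4_spec Q y :
  closed_under Q P23 -> closed_under Q P45 -> closed_under Q P24 ->
  closed_under Q P35 -> closed_under Q P34 -> Q y -> reach y (sort4 y) /\ Q (sort4 y).
Proof.
  intros H23 H45 H24 H35 H34 Hy; unfold sort4.
  destruct (compare_swap_spec Q P23 a2 a3 y) as [R1 Q1]; try assumption.
  destruct (compare_swap_spec Q P45 a4 a5 _ H45 Q1) as [R2 Q2].
  destruct (compare_swap_spec Q P24 a2 a4 _ H24 Q2) as [R3 Q3].
  destruct (compare_swap_spec Q P35 a3 a5 _ H35 Q3) as [R4 Q4].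
  destruct (compare_swap_spec Q P34 a3 a4 _ H34 Q4) as [R5 Q5].
  split; [|exact Q5].
  apply (reach_trans _ _ _ R1), (reach_trans _ _ _ R2), (reach_trans _ _ _ R3),
    (reach_trans _ _ _ R4), R5.
Qed.

(** * Every orbit meets D *)

Definition coords (x : V6) : list R := [a2 x; a3 x; a4 x; a5 x].

Definition spread_le1 (y : V6) : Prop :=
  forall r s, In r (coords y) -> In s (coords y) -> r - s <= 1.

Ltac spread_by_cases :=
  unfold spread_le1, coords; simpl;
  intros ? ? [<-|[<-|[<-|[<-|[]]]]] [<-|[<-|[<-|[<-|[]]]]]; lra.

Lemma reach_spread_le1 x : inA x -> exists y, reach x y /\ inA y /\ spread_le1 y.
Proof.
  intros HA.
  destruct (int_shift_into_01 (a2 x)) as [z2 H2].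
  destruct (int_shift_into_01 (a3 x)) as [z3 H3].
  destruct (int_shift_into_01 (a4 x)) as [z4 H4].
  set (y0 := translate (scale (IZR z4) (mkV 0 0 0 0 1 (-1)))
               (translate (scale (IZR z3) (mkV 0 0 0 1 0 (-1)))
                 (translate (scale (IZR z2) (mkV 0 0 1 0 0 (-1))) x))).
  assert (R0 : reach x y0).
  { eapply reach_trans; [apply reach_shift_a2|].
    eapply reach_trans; [apply reach_shift_a3|]. apply reach_shift_a4. }
  set (Q y := inA y /\ 0 <= a2 y < 1 /\ 0 <= a3 y < 1 /\ 0 <= a4 y < 1).
  assert (Q0 : Q y0) by (unfold Q, inA, y0, translate, scale in *; simpl; lra).
  assert (HQ : closed_under Q P23 /\ closed_under Q P34)
    by (split; intros []; unfold Q, inA; simpl; lra).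
  destruct (sort3_spec Q y0 (proj1 HQ) (proj2 HQ) Q0) as [R1 Q1].
  pose proof (sort3_sorted y0) as Hsorted.
  set (y := sort3 y0) in *; clearbody y.
  enough (exists y', reach y y' /\ inA y' /\ spread_le1 y') as (y' & R2 & HA' & Hs')
    by (exists y'; split; [apply (reach_trans _ _ _ R0), (reach_trans _ _ _ R1), R2 | auto]).
  (* Now 0 <= b2 <= b3 <= b4 < 1 and b5 = 1 - (b2 + b3 + b4) > -2: moving one unit
     from b4, and if needed one from b3, to b5 closes the gap. *)
  unfold Q, inA in Q1; destruct y as [b0 b1 b2 b3 b4 b5]; simpl in *.
  destruct (Rle_lt_dec b4 (b5 + 1)); [|destruct (Rle_lt_dec (b5 + 2) b3)].
  - exists (mkV b0 b1 b2 b3 b4 b5); split; [apply reach_refl|].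
    split; [unfold inA; simpl; lra | spread_by_cases].
  - exists (act_gen_inv S3 (act_gen_inv S4 (mkV b0 b1 b2 b3 b4 b5))).
    split; [apply (reach_trans _ _ _ (reach_gen_inv S4 _)), reach_gen_inv|].
    split; [unfold inA; simpl; lra | spread_by_cases].
  - exists (act_gen_inv S4 (mkV b0 b1 b2 b3 b4 b5)); split; [apply reach_gen_inv|].
    split; [unfold inA; simpl; lra | spread_by_cases].
Qed.

Lemma same_elements_coords_swap g y :
  In g [P23; P24; P25; P34; P35; P45] -> same_elements (coords (act_gen g y)) (coords y).
Proof.
  intros Hg r; destruct y; simpl in Hg;
    repeat destruct Hg as [<-|Hg]; try contradiction; simpl; tauto.
Qed.

Lemma reach_sorted_spread_le1 x :
  inA x -> exists y, reach x y /\ inA y /\ sorted y /\ a5 y - a2 y <= 1.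
Proof.
  intros HA; destruct (reach_spread_le1 x HA) as (y & R1 & HAy & Hs).
  set (Q y := inA y /\ spread_le1 y).
  assert (HQ : forall g, In g [P23; P24; P25; P34; P35; P45] -> closed_under Q g).
  { intros g Hg z [HAz Hsz]; split.
    - unfold inA in *; destruct z; simpl in Hg;
        repeat destruct Hg as [<-|Hg]; try contradiction; simpl in *; lra.
    - intros r s Hr Hs'; apply (same_elements_coords_swap g z Hg) in Hr, Hs'; auto. }
  destruct (sort4_spec Q y) as [R2 [HA2 Hs2]]; try (apply HQ; simpl; tauto).
  { split; assumption. }
  exists (sort4 y); split; [exact (reach_trans _ _ _ R1 R2)|].
  split; [exact HA2|]; split; [apply sort4_sorted|].
  apply Hs2; simpl; tauto.
Qed.

(* sigma_5 followed by (alpha_2 alpha_4)(alpha_3 alpha_5) maps the sorted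
   (b2, b3, b4, b5) to the sorted (b4 - 1/2, b5 - 1/2, b2 + 1/2, b3 + 1/2). *)
Lemma reach_balanced y :
  inA y -> sorted y -> a5 y - a2 y <= 1 ->
  exists y', reach y y' /\ inA y' /\ sorted y' /\ a4 y' + a5 y' <= 1.
Proof.
  intros HA Hs Hspread; destruct (Rle_lt_dec (a4 y + a5 y) 1).
  - exists y; split; [apply reach_refl | auto].
  - exists (act_gen P35 (act_gen P24 (act_gen S5 y))).
    split; [exists [(P35, true); (P24, true); (S5, true)]; reflexivity|].
    unfold inA, sorted in *; destruct y; simpl in *; lra.
Qed.

Lemma reach_a0_normalized x :
  inA x -> exists y, reach x y /\ coords y = coords x /\ -(1/2) <= a0 y <= 0 /\ a1 y = - a0 y.
Proof.
  intros [HA _]; destruct (int_shift_into_01 (a0 x + 1/2)) as [z Hz].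
  set (y := translate (scale (IZR z) (mkV 1 (-1) 0 0 0 0)) x).
  assert (Ry : reach x y) by apply reach_shift_a0.
  destruct (Rle_lt_dec (a0 y) 0).
  - exists y; split; [exact Ry|].
    unfold y, translate, scale, coords in *; simpl in *.
    split; [repeat f_equal; ring | lra].
  - exists (act_gen P01 y); split; [exact (reach_trans _ _ _ Ry (reach_gen _ _))|].
    unfold y, translate, scale, coords in *; destruct x; simpl in *.
    split; [repeat f_equal; ring | lra].
Qed.

Lemma reach_inD x : inA x -> exists y, reach x y /\ inD y.
Proof.
  intros HA.
  destruct (reach_sorted_spread_le1 x HA) as (y1 & R1 & HA1 & Hs1 & Hspread1).
  destruct (reach_balanced y1 HA1 Hs1 Hspread1) as (y2 & R2 & HA2 & Hs2 & Hbal2).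
  destruct (reach_a0_normalized y2 HA2) as (y3 & R3 & Hc3 & Ha0 & Ha1).
  exists y3; split; [apply (reach_trans _ _ _ R1), (reach_trans _ _ _ R2), R3|].
  unfold coords, inA, sorted in *; injection Hc3; intros; repeat split; lra.
Qed.

(** * Interior points of D in one orbit coincide *)

(* [congruent x y]: y is obtained from x by exchanging alpha_0 and alpha_1 or
   not ([swap]), rearranging alpha_2..alpha_5 (only the set of values [p_i] is
   recorded, which suffices since the interior coordinates are distinct), and
   translating by (c, -c, v_0, ..., v_3) with all entries in [in_coset h]. *)
Inductive congruent (x y : V6) : Prop :=
  Congruent (swap h : bool) (c p0 p1 p2 p3 v0 v1 v2 v3 : R) :
    a0 y = (if swap then a1 x else a0 x) + c ->
    a1 y = (if swap then a0 x else a1 x) - c ->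
    a2 y = p0 + v0 -> a3 y = p1 + v1 -> a4 y = p2 + v2 -> a5 y = p3 + v3 ->
    same_elements [p0; p1; p2; p3] (coords x) ->
    in_coset h c -> in_coset h v0 -> in_coset h v1 -> in_coset h v2 -> in_coset h v3 ->
    v0 + v1 + v2 + v3 = 0 -> congruent x y.

Lemma congruent_refl x : congruent x x.
Proof.
  apply (Congruent x x false false 0 (a2 x) (a3 x) (a4 x) (a5 x) 0 0 0 0);
    try (exists 0%Z; simpl; ring); try ring.
  intro r; reflexivity.
Qed.

Ltac congruent_step Hsame :=
  simpl; first
  [ lra
  | eapply same_elements_trans; [|exact Hsame]; intro; simpl; tauto
  | apply in_coset_add1; assumption | apply in_coset_sub1; assumption
  | apply in_coset_addh; assumption | apply in_coset_subh; assumption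
  | apply in_coset_opp; assumption | assumption ].

Lemma congruent_act_gen x y g : congruent x y -> congruent x (act_gen g y).
Proof.
  destruct y as [b0 b1 b2 b3 b4 b5].
  intros [s h c p0 p1 p2 p3 v0 v1 v2 v3 E0 E1 E2 E3 E4 E5
          Hsame Hc Hv0 Hv1 Hv2 Hv3 Hsum].
  simpl in *; destruct g.
  - apply (Congruent _ _ s h (c + 1) p0 p1 p2 p3 v0 v1 v2 v3); congruent_step Hsame.
  - apply (Congruent _ _ s h c p0 p1 p2 p3 (v0 + 1) v1 v2 (v3 - 1)); congruent_step Hsame.
  - apply (Congruent _ _ s h c p0 p1 p2 p3 v0 (v1 + 1) v2 (v3 - 1)); congruent_step Hsame.
  - apply (Congruent _ _ s h c p0 p1 p2 p3 v0 v1 (v2 + 1) (v3 - 1)); congruent_step Hsame.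
  - apply (Congruent _ _ s (negb h) (c + 1/2) p0 p1 p2 p3
             (v0 + 1/2) (v1 + 1/2) (v2 - 1/2) (v3 - 1/2)); congruent_step Hsame.
  - apply (Congruent _ _ s h c p1 p0 p2 p3 v1 v0 v2 v3); congruent_step Hsame.
  - apply (Congruent _ _ s h c p2 p1 p0 p3 v2 v1 v0 v3); congruent_step Hsame.
  - apply (Congruent _ _ s h c p3 p1 p2 p0 v3 v1 v2 v0); congruent_step Hsame.
  - apply (Congruent _ _ s h c p0 p2 p1 p3 v0 v2 v1 v3); congruent_step Hsame.
  - apply (Congruent _ _ s h c p0 p3 p2 p1 v0 v3 v2 v1); congruent_step Hsame.
  - apply (Congruent _ _ s h c p0 p1 p3 p2 v0 v1 v3 v2); congruent_step Hsame.
  - apply (Congruent _ _ (negb s) h (- c) p0 p1 p2 p3 v0 v1 v2 v3);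
      destruct s; congruent_step Hsame.
Qed.

Lemma congruent_act_gen_inv x y g : congruent x y -> congruent x (act_gen_inv g y).
Proof.
  intros Hxy.
  destruct g; try (destruct y; apply (congruent_act_gen _ _ _ Hxy)).
  all: destruct y as [b0 b1 b2 b3 b4 b5];
    destruct Hxy as [s h c p0 p1 p2 p3 v0 v1 v2 v3 E0 E1 E2 E3 E4 E5
                     Hsame Hc Hv0 Hv1 Hv2 Hv3 Hsum];
    simpl in *.
  - apply (Congruent _ _ s h (c - 1) p0 p1 p2 p3 v0 v1 v2 v3); congruent_step Hsame.
  - apply (Congruent _ _ s h c p0 p1 p2 p3 (v0 - 1) v1 v2 (v3 + 1)); congruent_step Hsame.
  - apply (Congruent _ _ s h c p0 p1 p2 p3 v0 (v1 - 1) v2 (v3 + 1)); congruent_step Hsame.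
  - apply (Congruent _ _ s h c p0 p1 p2 p3 v0 v1 (v2 - 1) (v3 + 1)); congruent_step Hsame.
  - apply (Congruent _ _ s (negb h) (c - 1/2) p0 p1 p2 p3
             (v0 - 1/2) (v1 - 1/2) (v2 + 1/2) (v3 + 1/2)); congruent_step Hsame.
Qed.

Lemma congruent_act_word x w : congruent x (act_word w x).
Proof.
  induction w as [|[g []] w IH]; simpl.
  - apply congruent_refl.
  - apply congruent_act_gen, IH.
  - apply congruent_act_gen_inv, IH.
Qed.

Lemma interiorD_strict x : interiorD x ->
  -(1/2) < a0 x < 0 /\ a2 x < a3 x /\ a3 x < a4 x /\ a4 x < a5 x /\ a4 x + a5 x < 1.
Proof.
  intros [HD [eps [Heps Hnbhd]]].
  assert (Hmove : forall d0 d1 d2 d3 d4 d5 : R,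
    d0 + d1 = 0 -> d2 + d3 + d4 + d5 = 0 ->
    -1 <= d0 <= 1 -> -1 <= d1 <= 1 -> -1 <= d2 <= 1 ->
    -1 <= d3 <= 1 -> -1 <= d4 <= 1 -> -1 <= d5 <= 1 ->
    inD (mkV (a0 x + eps/2 * d0) (a1 x + eps/2 * d1) (a2 x + eps/2 * d2)
             (a3 x + eps/2 * d3) (a4 x + eps/2 * d4) (a5 x + eps/2 * d5))).
  { intros; unfold inD in HD; apply Hnbhd; unfold inA; simpl;
      [split; nra | apply Rabs_def1; nra ..]. }
  (* Each strict inequality would fail after a small move along one of these. *)
  unfold inD in HD.
  pose proof (Hmove 1 (-1) 0 0 0 0) as M1; pose proof (Hmove (-1) 1 0 0 0 0) as M2;
  pose proof (Hmove 0 0 1 (-1) 0 0) as M3; pose proof (Hmove 0 0 0 1 (-1) 0) as M4;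
  pose proof (Hmove 0 0 0 0 1 (-1)) as M5; pose proof (Hmove 0 0 (-1) 0 1 0) as M6.
  unfold inD in M1, M2, M3, M4, M5, M6; simpl in *.
  repeat split; lra.
Qed.

Lemma congruent_interior_eq x y : interiorD x -> interiorD y -> congruent x y -> y = x.
Proof.
  intros Hx Hy Hxy.
  pose proof (interiorD_strict x Hx) as Sx; pose proof (interiorD_strict y Hy) as Sy.
  destruct Hx as [Dx _], Hy as [Dy _]; unfold inD in Dx, Dy.
  destruct Hxy as [swap h c p0 p1 p2 p3 v0 v1 v2 v3 E0 E1 E2 E3 E4 E5
                   Hsame Hc Hv0 Hv1 Hv2 Hv3 Hsum].
  destruct h.
  - (* Undoing sigma_5, (a4 y - 1/2, a5 y - 1/2, a2 y + 1/2, a3 y + 1/2) is an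
       integral translate of x in the alcove, so a4 x + a5 x = a2 y + a3 y + 1 > 1. *)
    exfalso.
    assert (Hsame' : same_elements [p2; p3; p0; p1] [a2 x; a3 x; a4 x; a5 x])
      by (eapply same_elements_trans; [|exact Hsame]; intro; simpl; tauto).
    assert (Heq : [p2 + (v2 - 1/2); p3 + (v3 - 1/2); p0 + (v0 + 1/2); p1 + (v1 + 1/2)]
                  = [a2 x; a3 x; a4 x; a5 x])
      by (apply alcove_rigid; first
            [ apply (in_coset_subh true); assumption
            | apply (in_coset_addh true); assumption
            | assumption | lra ]).
    injection Heq; intros; lra.
  - (* c = a0 y - a0 x, or c = a0 y + a0 x after the exchange *)
    assert (Hc0 : c = 0).
    { apply int_in_unit_interval_eq0; [exact Hc|]; destruct swap; lra. }
    destruct swap; [lra|].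
    assert (Heq : [p0 + v0; p1 + v1; p2 + v2; p3 + v3] = [a2 x; a3 x; a4 x; a5 x])
      by (apply alcove_rigid; auto; lra).
    injection Heq; intros; destruct x, y; simpl in *; f_equal; lra.
Qed.

Theorem lemma2p3 :
  (forall x : V6, inA x -> exists w : list (gen * bool), inD (act_word w x)) /\
  (forall (w : list (gen * bool)) (x : V6),
      inA x -> interiorD x -> interiorD (act_word w x) -> act_word w x = x).
Proof.
  split.
  - intros x HA; destruct (reach_inD x HA) as (y & [w <-] & HD); exists w; exact HD.
  - intros w x _ Hx Hy; exact (congruent_interior_eq x _ Hx Hy (congruent_act_word x w)).
Qed.
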